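(* Let $(S,\mathcal{A},\mu)$ be a complete, $\sigma$-finite measure space and $X$ an alternatively octahedral real Banach space. Then $L^1(\mu,X)$ and $L^\infty(\mu,X)$ are also alternatively octahedral.
   Context: A real Banach space $X$ is alternatively octahedral (AOH) if for every $n\in\mathbb{N}$, all $x_1,\dots,x_n\in S_X$ (the unit sphere) and every $\varepsilon>0$ there is $y\in S_X$ with $\max\{\|x_i+y\|,\|x_i-y\|\}\ge2-\varepsilon$ for all $i=1,\dots,n$. $L^1(\mu,X)$, $L^\infty(\mu,X)$ are the Lebesgue–Bochner spaces. *)

From HB Require Import structures.
From mathcomp Require Import all_boot all_order all_algebra.
From mathcomp Require Import all_classical all_reals all_analysis ess_sup_inf.
Set Implicit Arguments. Unset Strict Implicit. Unset Printing Implicit Defensive.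
Import Order.TTheory GRing.Theory Num.Theory.
Import numFieldNormedType.Exports.
Local Open Scope classical_set_scope.
Local Open Scope ring_scope.

(* Alternative octahedrality for a (semi)normed space whose elements are
   the members of the predicate [P] of a type [V] with addition/subtraction
   [add]/[sub] and (semi)norm [N].
   For a seminormed space of representatives, this is exactly AOH of the
   associated quotient normed space (the sphere and the quantities
   N(x +- y) only depend on classes). *)
Definition AOH_on (R : realType) (V : Type) (P : V -> Prop)
    (add sub : V -> V -> V) (N : V -> R) : Prop :=
  forall (n : nat) (x : 'I_n.+1 -> V),
    (forall i, P (x i) /\ N (x i) = 1) ->
    forall eps : R, 0 < eps ->
    exists y : V, [/\ P y, N y = 1 &
      forall i, 2 - eps <= Num.max (N (add (x i) y)) (N (sub (x i) y))].

Definition AOH (R : realType) (X : normedModType R) : Prop :=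
  @AOH_on R X (fun _ => True) (fun a b => a + b) (fun a b => a - b)
    (fun a => `|a|).

Section Bochner.
Context d (T : measurableType d) (R : realType) (X : normedModType R).
Variable mu : {measure set T -> \bar R}.

Definition simple_fun (f : T -> X) : Prop :=
  finite_set (range f) /\ forall x : X, measurable (f @^-1` [set x]).

Definition strongly_measurable (f : T -> X) : Prop :=
  exists s : nat -> T -> X, (forall k, simple_fun (s k)) /\
    {ae mu, forall t, (fun k => s k t) @ \oo --> f t}.

Definition L1_mem (f : T -> X) : Prop :=
  strongly_measurable f /\ (\int[mu]_t (`|f t|)%:E < +oo)%E.
Definition L1_norm (f : T -> X) : R := fine (\int[mu]_t (`|f t|)%:E).

Definition Linf_mem (f : T -> X) : Prop :=
  strongly_measurable f /\ (ess_sup mu (fun t => (`|f t|)%:E) < +oo)%E.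
Definition Linf_norm (f : T -> X) : R := fine (ess_sup mu (fun t => (`|f t|)%:E)).

Definition AOH_L1 : Prop :=
  @AOH_on R (T -> X) L1_mem (fun f g => f \+ g) (fun f g => f \- g) L1_norm.
Definition AOH_Linf : Prop :=
  @AOH_on R (T -> X) Linf_mem (fun f g => f \+ g) (fun f g => f \- g) Linf_norm.
End Bochner.

(* L^oo: when |x|_oo = 1, strong measurability gives a unit vector u such that
   x stays within del of u on a set of positive measure.  Alternative
   octahedrality of X applied to these u_i yields y, and the constant function y
   works, since there |x_i +- y| >= |u_i +- y| - del.
   L^1: sigma-finiteness gives a set of finite positive measure inside which all
   x_i are within eta of constants v_i = |v_i| u_i on a subset B of positive
   measure.  Take y from AOH of X for the u_i and the bump g = 1_B y / mu(B).
   For unit vectors with |u + y| >= 2 - del and a, b >= 0 one has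
   |a u + b y| >= (1 - del)(a + b), so |x_i + g| >= (1 - del)|x_i| + 1_B / mu(B)
   up to O(del) on B; integrating gives |x_i + g|_1 >= 2 - O(del).  Completeness
   of mu makes |x_i +- g| measurable as an a.e. limit of measurable functions. *)

From mathcomp Require Import all_boot all_order all_algebra.
From mathcomp Require Import all_classical all_reals all_analysis ess_sup_inf.
From mathcomp Require Import finmap measurable_realfun lra.
Set Implicit Arguments. Unset Strict Implicit. Unset Printing Implicit Defensive.
Import Order.TTheory GRing.Theory Num.Theory.
Import numFieldNormedType.Exports.
Local Open Scope classical_set_scope.
Local Open Scope ring_scope.

Lemma finite_set_sub_range (U : pointedType) (A : set U) :
  finite_set A -> exists e : nat -> U, A `<=` range e.
Proof.
move=> finA; exists (nth point (fset_set A)) => a Aa.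
exists (index a (fset_set A)) => //; apply: nth_index.
by rewrite in_fset_set //; apply/mem_set.
Qed.

Lemma measurable_cst_set d (T : measurableType d) (P : Prop) :
  measurable [set _ : T | P].
Proof.
have [p|np] := pselect P.
  by rewrite (_ : [set _ | P] = setT) //; apply/seteqP; split.
by rewrite (_ : [set _ | P] = set0) //; apply/seteqP; split.
Qed.

Section simple_functions.
Context d (T : measurableType d) (R : realType) (X : normedModType R).
Variable mu : {measure set T -> \bar R}.
Implicit Types (s h : T -> X) (B : set T).

Lemma simple_fun_cst (c : X) : simple_fun (cst c : T -> X).
Proof.
split; first by apply: (sub_finite_set _ (finite_set1 c)) => _ [t _ <-].
by move=> x; rewrite preimage_cst; case: ifPn.
Qed.

Lemma simple_fun_indic B (w : X) : measurable B ->
  simple_fun (fun t => \1_B t *: w).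
Proof.
move=> mB; split.
  apply: (sub_finite_set _ (finite_set2 w 0)) => _ [t _ <-].
  by rewrite indicE; case: (t \in B); [left; rewrite scale1r|right; rewrite scale0r].
move=> x; rewrite (_ : _ @^-1` _ =
    (B `&` [set _ | w = x]) `|` (~` B `&` [set _ | 0 = x])).
  apply: measurableU; apply: measurableI => //; try exact: measurable_cst_set.
  exact: measurableC.
apply/seteqP; split => t /=; rewrite indicE;
  have [tB|tB] := pselect (B t); rewrite ?(mem_set tB) ?(memNset tB) ?scale1r ?scale0r.
- by move=> <-; left.
- by move=> <-; right.
- by move=> [[]|[]].
- by move=> [[]|[]].
Qed.

Lemma simple_fun_strongly_measurable h : simple_fun h -> strongly_measurable mu h.
Proof. by exists (fun=> h); split => //; apply: aeW => t; exact: cvg_cst. Qed.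

Lemma measurable_fun_simple2 d' (Y : measurableType d') s h (phi : X -> X -> Y) :
  simple_fun s -> simple_fun h -> measurable_fun setT (fun t => phi (s t) (h t)).
Proof.
move=> [/finite_set_sub_range[e se] ms] [/finite_set_sub_range[e' he'] mh] _ A mA.
rewrite setTI (_ : _ @^-1` A = \bigcup_j \bigcup_k
    (s @^-1` [set e j] `&` h @^-1` [set e' k] `&` [set _ | A (phi (e j) (e' k))])).
  apply: bigcupT_measurable => j; apply: bigcupT_measurable => k.
  by apply: measurableI; [exact: measurableI | exact: measurable_cst_set].
apply/seteqP; split => [t /= At | t [j _ [k _ [[/= <- <-]]]] //].
have [j _ ej] := se (s t) (imageT s t); have [k _ ek] := he' (h t) (imageT h t).
by exists j => //; exists k => //=; rewrite ej ek.
Qed.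

End simple_functions.

Lemma exists_small_pos (R : realFieldType) (eps k : R) : 0 < eps -> 1 <= k ->
  exists del : R, [/\ 0 < del, del <= 1 & k * del <= eps].
Proof.
move=> eps0 k1; have k0 : 0 < k by lra.
have [m_eps m1] : Num.min eps 1 <= eps /\ Num.min eps 1 <= 1.
  by rewrite !ge_min !lexx orbT.
exists (Num.min eps 1 / k); split.
- by rewrite divr_gt0 // lt_min eps0 ltr01.
- by rewrite ler_pdivrMr // (le_trans m1) // ler_peMr.
- by rewrite mulrC divfK ?gt_eqF.
Qed.

Lemma fine_eq_neq0 (R : realType) (x : \bar R) (r : R) :
  r != 0 -> fine x = r -> x = r%:E.
Proof. by move=> r0; case: x => [x /= -> //| |] /= r_eq; rewrite -r_eq eqxx in r0. Qed.

Lemma le_fine (R : realType) (x : \bar R) (r : R) :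
  (r%:E <= x)%E -> (x < +oo)%E -> r <= fine x.
Proof. by case: x. Qed.

Section negligible_sets.
Context d (T : measurableType d) (R : realType).
Variable mu : {measure set T -> \bar R}.

Lemma ess_sup_ge_nonnegligible (F : T -> \bar R) (C : set T) (c : \bar R) :
  ~ mu.-negligible C -> (forall t, C t -> (c <= F t)%E) -> (c <= ess_sup mu F)%E.
Proof.
move=> nC cF; rewrite leNgt; apply/negP => supc; apply: nC.
apply: negligibleS (ess_sup_ge mu F) => t /cF cFt /=.
by apply/negP; rewrite -ltNge (lt_le_trans supc).
Qed.

Lemma measureT_gt0_of_nonnegligible (C : set T) :
  ~ mu.-negligible C -> (0 < mu setT)%E.
Proof.
move=> nC; rewrite lt0e measure_ge0 andbT; apply: contra_notN nC => /eqP muT0.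
by apply: negligibleS (subsetT C) _; apply/negligibleP.
Qed.

Lemma sigma_finite_nonnegligible : sigma_finite setT mu -> ~ mu.-negligible setT ->
  exists A, [/\ measurable A, (mu A < +oo)%E & ~ mu.-negligible A].
Proof.
move=> [F -> mF] nT; apply: contrapT => /forallNP noA; apply: nT.
apply: negligible_bigcup => k; have [mFk finFk] := mF k.
by apply: contrapT => nFk; apply: (noA (F k)).
Qed.

End negligible_sets.

Section strongly_measurable.
Context d (T : measurableType d) (R : realType) (X : normedModType R).
Variable mu : {measure set T -> \bar R}.
Implicit Types (f h : T -> X) (A : set T).

Lemma strongly_measurable_near_cst f A (eta : R) : 0 < eta ->
  strongly_measurable mu f -> ~ mu.-negligible A ->
  exists v : X, ~ mu.-negligible (A `&` [set t | `|f t - v| < eta]).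
Proof.
move=> eta0 [s [ss s_cvg]] nA; apply: contrapT => /forallNP near_negl.
have /choice [e se] m : exists e : nat -> X, range (s m) `<=` range e.
  by apply: finite_set_sub_range; case: (ss m).
(* the values of the s m form a countable set, so A is covered by countably
   many negligible sets and the null set where s does not converge to f *)
apply: nA; apply: (@negligibleS _ _ _ _ (~` [set t | s ^~ t @ \oo --> f t] `|`
   \bigcup_m \bigcup_j (A `&` [set t | `|f t - e m j| < eta]))).
  move=> t At; have [|] := pselect (s ^~ t @ \oo --> f t); last by left.
  move=> /cvgrPdist_lt/(_ eta eta0)[m _ Hm].
  have [j _ ej] := se m (s m t) (imageT _ t).
  by right; exists m => //; exists j => //; split => //=; rewrite ej; apply: Hm => /=.
apply: negligibleU => //; apply: negligible_bigcup => m.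
by apply: negligible_bigcup => j; apply: contrapT; exact: near_negl.
Qed.

Lemma strongly_measurable_near_cst_family (I : finType) (f : I -> T -> X) A (eta : R) :
  0 < eta -> (forall i, strongly_measurable mu (f i)) -> ~ mu.-negligible A ->
  exists v : I -> X,
    ~ mu.-negligible (A `&` [set t | forall i, `|f i t - v i| < eta]).
Proof.
move=> eta0 sf nA.
suff [v nv] : exists v : I -> X, ~ mu.-negligible
    (A `&` [set t | forall i, i \in enum I -> `|f i t - v i| < eta]).
  exists v => negl; apply: nv; apply: negligibleS negl => t [At near_t].
  by split=> // i; apply: near_t; rewrite mem_enum.
elim: (enum I) => [|i r [v nv]].
  by exists (fun=> 0) => negl; apply: nA; apply: negligibleS negl => t At; split.
have [w nw] := strongly_measurable_near_cst eta0 (sf i) nv.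
exists (fun j => if j == i then w else v j) => negl; apply: nw.
apply: negligibleS negl => t [[At near_t] near_w]; split=> // j; rewrite inE.
by have [->|ji] := eqVneq j i => //= /near_t.
Qed.

Hypothesis mu_complete : measure_is_complete mu.

Lemma measurable_fun_ae_cvg (h : (T -> R)^nat) (g : T -> R) :
  (forall m, measurable_fun setT (h m)) ->
  {ae mu, forall t, h ^~ t @ \oo --> g t} -> measurable_fun setT g.
Proof.
move=> mh [N [mN N0 sN]].
rewrite -(setUv N) setUC; apply/measurable_funU => //; first exact: measurableC.
split.
- apply: (measurable_fun_cvg (h := h)) => [m|t Nt]; first exact: measurable_funS (mh m).
  by apply: contrapT => nc; apply: Nt; apply: sN.
- by move=> _ Y mY; apply: mu_complete; exists N; split => //; exact: subIsetl.
Qed.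

Lemma measurable_normD_simple f h : strongly_measurable mu f -> simple_fun h ->
  measurable_fun setT (fun t => `|f t + h t|).
Proof.
move=> [s [ss s_cvg]] sh.
apply: (measurable_fun_ae_cvg (h := fun m t => `|s m t + h t|)).
  by move=> m; exact: (measurable_fun_simple2 (fun a b : X => `|a + b|) (ss m) sh).
by apply: filterS s_cvg => t st; exact: (cvg_norm (cvgD st (cvg_cst _))).
Qed.

Lemma measurable_normr_strongly f : strongly_measurable mu f ->
  measurable_fun setT (fun t => `|f t|).
Proof.
move=> sf; have := measurable_normD_simple sf (simple_fun_cst _ 0).
by under eq_fun do rewrite addr0.
Qed.

Lemma measurable_near_cst f (v : X) (eta : R) : strongly_measurable mu f ->
  measurable [set t | `|f t - v| < eta].
Proof.
move=> sf; have := measurable_normD_simple sf (simple_fun_cst _ (- v)) measurableT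
  (measurable_itv `]-oo, eta[).
by rewrite setTI; congr measurable; apply/seteqP; split => t /=; rewrite in_itv.
Qed.

Lemma measurable_near_cst_family (I : finType) (f : I -> T -> X) (v : I -> X)
    (eta : R) :
  (forall i, strongly_measurable mu (f i)) ->
  measurable [set t | forall i, `|f i t - v i| < eta].
Proof.
move=> sf; rewrite (_ : [set t | _] =
    \bigcap_(i in setT) [set t | `|f i t - v i| < eta]).
  apply: fin_bigcap_measurable => [|i _]; first exact: finite_finset.
  exact: measurable_near_cst.
by apply/seteqP; split => t /= near_t i => [_|]; exact: near_t.
Qed.

Lemma sigma_finite_near_cst_family (I : finType) (f : I -> T -> X) (del : R) :
  sigma_finite setT mu -> ~ mu.-negligible setT -> 0 < del ->
  (forall i, strongly_measurable mu (f i)) ->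
  exists B (v : I -> X), [/\ measurable B, (0 < mu B < +oo)%E &
    forall t i, B t -> `|f i t - v i| * fine (mu B) <= del].
Proof.
move=> mu_sfin nT del0 sf.
have [A [mA finA nA]] := sigma_finite_nonnegligible mu_sfin nT.
have muA0 : 0 <= fine (mu A) by rewrite fine_ge0.
pose eta := del / (fine (mu A) + 1).
have etaE : eta * (fine (mu A) + 1) = del by rewrite divfK // gt_eqF // ltr_pwDr.
have eta0 : 0 < eta by rewrite divr_gt0 ?ltr_pwDr.
have [v nB] := strongly_measurable_near_cst_family eta0 sf nA.
set B := A `&` _ in nB; have mB : measurable B.
  exact/measurableI/measurable_near_cst_family.
have muBA : (mu B <= mu A)%E.
  by apply: le_measure; [exact: mem_set|exact: mem_set|exact: subIsetl].
have finB := le_lt_trans muBA finA.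
have mB_le : fine (mu B) <= fine (mu A).
  by apply: fine_le; rewrite ?ge0_fin_numE ?measure_ge0.
exists B, v; split => //.
  rewrite finB andbT lt0e measure_ge0 andbT.
  by apply: contra_notN nB => /eqP muB0; apply/negligibleP.
move=> t i [_ /= /(_ i)/ltW near_t].
have mB0 : 0 <= fine (mu B) by rewrite fine_ge0 ?measure_ge0.
by have := ler_pM (normr_ge0 _) mB0 near_t mB_le; nra.
Qed.

End strongly_measurable.

Section normed_space.
Context (R : realType) (X : normedModType R).
Implicit Types (x u v w e : X) (a b r c del eta : R).

Lemma normD_ge_dist x u w : `|u + w| - `|x - u| <= `|x + w|.
Proof.
have -> : u + w = (x + w) - (x - u) by rewrite opprB [RHS]addrC addrA subrK.
by rewrite lerBlDr ler_normB.
Qed.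

Lemma normr_normalize v : v != 0 -> `| `|v|^-1 *: v| = 1.
Proof. by move=> v0; rewrite normrZ ger0_norm ?invr_ge0 // mulVf ?normr_eq0. Qed.

Lemma exists_polar e v : `|e| = 1 -> exists2 u, `|u| = 1 & v = `|v| *: u.
Proof.
move=> e1; have [->|v0] := eqVneq v 0; first by exists e; rewrite ?normr0 ?scale0r.
exists (`|v|^-1 *: v); first exact: normr_normalize.
by rewrite scalerA mulfV ?scale1r ?normr_eq0.
Qed.

Lemma norm_nonneg_comb_ge u w a b del : `|u| = 1 -> `|w| = 1 ->
  2 - del <= `|u + w| -> 0 <= a -> 0 <= b -> 0 <= del ->
  (1 - del) * (a + b) <= `|a *: u + b *: w|.
Proof.
wlog ba : u w a b / b <= a => [hwlog u1 w1 uw a0 b0 del0|u1 w1 uw a0 b0 del0].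
  have [ba|/ltW ab] := leP b a; first by apply: hwlog.
  by rewrite [a + b]addrC [a *: u + _]addrC; apply: hwlog => //; rewrite [w + u]addrC.
have -> : a *: u + b *: w = a *: (u + w) - (a - b) *: w.
  by rewrite scalerDr scalerBl opprB -addrA [a *: w + _]addrC subrK.
apply: le_trans (lerB_dist _ _).
rewrite !normrZ w1 (ger0_norm a0) ger0_norm ?subr_ge0 //.
have : a * (2 - del) <= a * `|u + w| by apply: ler_wpM2l.
nra.
Qed.

Lemma normD_scale_ge x u w r c del eta : `|u| = 1 -> `|w| = 1 ->
  2 - del <= `|u + w| -> 0 <= r -> 0 <= c -> 0 <= del -> del <= 1 ->
  `|x - r *: u| <= eta ->
  (1 - del) * `|x| + ((1 - del) * c - 2 * eta) <= `|x + c *: w|.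
Proof.
move=> u1 w1 uw r0 c0 del0 del1 xu.
have comb := norm_nonneg_comb_ge u1 w1 uw r0 c0 del0.
have dist := normD_ge_dist x (r *: u) (c *: w).
have : `|x| <= eta + r.
  rewrite -[x](subrK (r *: u)) (le_trans (ler_normD _ _)) //.
  by rewrite normrZ u1 mulr1 ger0_norm ?lerD2r.
move=> /(ler_wpM2l (_ : 0 <= 1 - del)); rewrite subr_ge0 => /(_ del1).
have := normr_ge0 (x - r *: u); nra.
Qed.

End normed_space.


Section Linf.
Context d (T : measurableType d) (R : realType) (X : normedModType R).
Variable mu : {measure set T -> \bar R}.
Implicit Types f : T -> X.

Lemma Linf_sphere_ae_le1 f : Linf_norm mu f = 1 -> {ae mu, forall t, `|f t| <= 1}.
Proof.
move=> /(fine_eq_neq0 (oner_neq0 R)) f1.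
by apply: filterS (ess_sup_ge mu (fun t => (`|f t|)%:E)) => t; rewrite f1 lee_fin.
Qed.

Lemma Linf_sphere_near_unit f (del : R) : strongly_measurable mu f ->
  Linf_norm mu f = 1 -> 0 < del -> del <= 1 ->
  exists2 u : X, `|u| = 1 & ~ mu.-negligible [set t | `|f t - u| < del].
Proof.
move=> sf f1 del0 del1; pose del' := del / 3.
have del'0 : 0 < del' by rewrite divr_gt0.
have del'E : del' * 3 = del by rewrite divfK // pnatr_eq0.
have f_le1 := Linf_sphere_ae_le1 f1.
have nA : ~ mu.-negligible [set t | 1 - del' < `|f t| <= 1].
  move=> nA; have : (ess_sup mu (fun t => (`|f t|)%:E) <= (1 - del')%:E)%E.
    apply/ess_supP; apply: negligibleS (negligibleU nA f_le1) => t /= ft.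
    have [ft1|] := leP `|f t| 1; last by right.
    by left; rewrite andbT ltNge; apply/negP => ?; apply: ft; rewrite lee_fin.
  rewrite (fine_eq_neq0 (oner_neq0 R) f1) lee_fin; lra.
have [v nv] := strongly_measurable_near_cst del'0 sf nA.
have [t [/andP[ft0 ft1] /= ftv]] : exists t, ([set t | 1 - del' < `|f t| <= 1]
    `&` [set t | `|f t - v| < del']) t.
  by apply/set0P/negP => /eqP AB0; apply: nv; rewrite AB0; exact: negligible_set0.
have v_near1 : `| `|v| - 1| < 2 * del'.
  have := ler_normB (f t) (f t - v); rewrite opprB addrC subrK.
  have := ler_normD (f t - v) v; rewrite subrK ltr_norml; lra.
have v0 : v != 0.
  by apply: contraTneq v_near1 => ->; rewrite normr0 sub0r normrN1 -leNgt; lra.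
exists (`|v|^-1 *: v); first exact: normr_normalize.
apply: contra_not nv => /(negligibleS _); apply => s [_ /= fsv].
have -> : f s - `|v|^-1 *: v = (f s - v) + (`|v| - 1) *: (`|v|^-1 *: v).
  by rewrite scalerBl scale1r scalerA mulfV ?normr_eq0 // scale1r addrA subrK.
rewrite (le_lt_trans (ler_normD _ _)) // normrZ normr_normalize // mulr1; lra.
Qed.

Lemma Linf_norm_add_cst_ge f (u w : X) (del : R) :
  Linf_norm mu f = 1 -> `|w| = 1 -> ~ mu.-negligible [set t | `|f t - u| < del] ->
  2 - del <= `|u + w| -> 2 - 2 * del <= Linf_norm mu (f \+ cst w).
Proof.
move=> f1 w1 nC uw; apply: le_fine.
  apply: (ess_sup_ge_nonnegligible nC) => t /= ftu; rewrite lee_fin.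
  have := normD_ge_dist (f t) u w; lra.
apply: (@le_lt_trans _ _ 2%:E); last exact: ltry.
apply/ess_supP; apply: filterS (Linf_sphere_ae_le1 f1) => t ft1 /=.
by rewrite lee_fin (le_trans (ler_normD _ _)) // w1 lerD2r.
Qed.

Lemma Linf_cst (y : X) : (0 < mu setT)%E ->
  Linf_mem mu (cst y) /\ Linf_norm mu (cst y) = `|y|.
Proof.
move=> muT; have supy : ess_sup mu (fun=> (`|y|)%:E) = (`|y|)%:E := ess_sup_cst _ muT.
split; last by rewrite /Linf_norm supy.
split; last by rewrite supy ltry.
exact/simple_fun_strongly_measurable/simple_fun_cst.
Qed.

End Linf.

Section L1.
Context d (T : measurableType d) (R : realType) (X : normedModType R).
Variable mu : {measure set T -> \bar R}.
Implicit Types (f : T -> X) (B : set T).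

Lemma integrable_indic_finite B : measurable B -> (mu B < +oo)%E ->
  mu.-integrable setT (EFin \o (\1_B : T -> R)).
Proof.
move=> mB finB; apply/integrableP; split; first exact/measurable_EFinP/measurable_indic.
under eq_integral do rewrite /= ger0_norm //.
by rewrite integral_indic // setIT.
Qed.

Lemma L1_sphere_exists_unit f : L1_norm mu f = 1 -> exists e : X, `|e| = 1.
Proof.
move=> f1; have [t ft0] : exists t, f t != 0.
  apply: contrapT => /forallNP f0; have {}f0 t : f t = 0 by apply/eqP/negbNE/negP/f0.
  move: f1; rewrite /L1_norm; under eq_integral do rewrite f0 normr0.
  by rewrite integral0 /= => /esym/eqP; rewrite oner_eq0.
by exists (`|f t|^-1 *: f t); exact: normr_normalize.
Qed.

Lemma L1_bump B (w : X) : measurable B -> (0 < mu B < +oo)%E -> `|w| = 1 ->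
  L1_mem mu (fun t => \1_B t *: ((fine (mu B))^-1 *: w)) /\
  L1_norm mu (fun t => \1_B t *: ((fine (mu B))^-1 *: w)) = 1.
Proof.
move=> mB /andP[B0 finB] w1; have mB0 : 0 < fine (mu B) by rewrite fine_gt0 // B0.
suff int1 : (\int[mu]_t (`|\1_B t *: ((fine (mu B))^-1 *: w)|)%:E = 1%:E)%E.
  split; last by rewrite /L1_norm int1.
  split; last by rewrite int1 ltry.
  exact/simple_fun_strongly_measurable/simple_fun_indic.
under eq_integral do rewrite !normrZ w1 mulr1 !ger0_norm ?invr_ge0 ?(ltW mB0) //
  EFinM muleC.
rewrite integralZl //; last exact: integrable_indic_finite.
have muB_fin : mu B \is a fin_num by rewrite ge0_fin_numE ?measure_ge0.
by rewrite integral_indic // setIT -(fineK muB_fin) -EFinM mulVf ?gt_eqF.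
Qed.

Hypothesis mu_complete : measure_is_complete mu.

Lemma integrable_L1 f : L1_mem mu f -> mu.-integrable setT (EFin \o (fun t => `|f t|)).
Proof.
move=> [sf finf]; apply/integrableP; split.
  exact/measurable_EFinP/(measurable_normr_strongly mu_complete).
by under eq_integral do rewrite /= normr_id.
Qed.

Lemma L1_norm_add_bump_ge f B (u w : X) (r del : R) :
  L1_mem mu f -> L1_norm mu f = 1 -> measurable B -> (0 < mu B < +oo)%E ->
  `|u| = 1 -> `|w| = 1 -> 2 - del <= `|u + w| -> 0 <= r -> 0 <= del -> del <= 1 ->
  (forall t, B t -> `|f t - r *: u| * fine (mu B) <= del) ->
  2 - 4 * del <= L1_norm mu (f \+ (fun t => \1_B t *: ((fine (mu B))^-1 *: w))).
Proof.
move=> Lf f1 mB /andP[B0 finB] u1 w1 uw r0 del0 del1 near_B.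
set m := fine (mu B); have m0 : 0 < m by rewrite fine_gt0 // B0.
pose eta := del / m.
have {}near_B t : B t -> `|f t - r *: u| <= eta by move/near_B; rewrite ler_pdivlMr.
set g := fun t => \1_B t *: (m^-1 *: w).
pose K := (1 - del) * m^-1 - 2 * eta.
have int_f := integrable_L1 Lf.
have int_B := integrable_indic_finite mB finB.
have int_f' : mu.-integrable setT (EFin \o (fun t => (1 - del) * `|f t|)).
  exact: (integrableZl measurableT (1 - del) int_f).
have int_B' : mu.-integrable setT (EFin \o (fun t => K * \1_B t)).
  exact: (integrableZl measurableT K int_B).
have int_lower : mu.-integrable setT
    (EFin \o (fun t => (1 - del) * `|f t| + K * \1_B t)).
  exact: (integrableD measurableT int_f' int_B').
have int_fg : mu.-integrable setT (EFin \o (fun t => `|f t + g t|)).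
  apply: le_integrable
    (integrableD measurableT int_f (integrableZl measurableT m^-1 int_B)).
  - by [].
  - exact/measurable_EFinP/(measurable_normD_simple mu_complete Lf.1)/simple_fun_indic.
  move=> t _ /=; rewrite lee_fin normr_id.
  rewrite ger0_norm ?addr_ge0 ?mulr_ge0 ?invr_ge0 ?(ltW m0) //.
  rewrite (le_trans (ler_normD _ _)) // lerD2l /g !normrZ w1 mulr1 mulrC.
  by rewrite !ger0_norm ?invr_ge0 ?(ltW m0).
have pointwise t : (1 - del) * `|f t| + K * \1_B t <= `|f t + g t|.
  rewrite /g indicE; have [tB|_] := boolP (t \in B); rewrite ?scale1r ?mulr1.
    by apply: normD_scale_ge u1 w1 uw r0 _ del0 del1 (near_B t (set_mem tB));
      rewrite invr_ge0 ltW.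
  by rewrite scale0r addr0 mulr0 addr0 ler_piMl // lerBlDr lerDl.
have := le_Rintegral measurableT int_lower int_fg (fun t _ => pointwise t).
rewrite (RintegralD measurableT int_f' int_B') (RintegralZl _ measurableT int_f).
rewrite (RintegralZl _ measurableT int_B) -[Rintegral _ _ _]/(L1_norm mu f) f1.
rewrite /Rintegral integral_indic // setIT -/m.
have -> : K * m = (1 - del) - 2 * del.
  by rewrite /K /eta mulrBl divfK ?gt_eqF // -mulrA divfK ?gt_eqF.
rewrite /L1_norm; lra.
Qed.


Lemma L1_sphere_nonnegligibleT f : L1_mem mu f -> L1_norm mu f = 1 ->
  ~ mu.-negligible setT.
Proof.
move=> Lf /(fine_eq_neq0 (oner_neq0 R)) f1 /(negligibleP _ measurableT) muT0.
move: f1; rewrite null_set_integral //; first by case=> /eqP; rewrite eq_sym oner_eq0.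
exact/measurable_EFinP/(measurable_normr_strongly mu_complete Lf.1).
Qed.

End L1.

Section aoh.
Context d (T : measurableType d) (R : realType) (X : normedModType R).
Variable mu : {measure set T -> \bar R}.

Lemma AOH_Linf_of_AOH : AOH X -> @AOH_Linf d T R X mu.
Proof.
move=> aohX n f f_sphere eps eps0.
have [del [del0 del1 del_eps]] :
    exists del : R, [/\ 0 < del, del <= 1 & 2 * del <= eps].
  by apply: exists_small_pos; rewrite ?ler1n.
have /choice[u hu] i : exists u : X,
    `|u| = 1 /\ ~ mu.-negligible [set t | `|f i t - u| < del].
  have [[sf _] f1] := f_sphere i.
  by have [u] := Linf_sphere_near_unit sf f1 del0 del1; exists u.
have [y [_ y1 y_far]] := aohX n u (fun i => conj I (hu i).1) del del0.
have [cst_mem cst1] := Linf_cst y (measureT_gt0_of_nonnegligible (hu ord0).2).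
exists (cst y); split => //; first by rewrite cst1.
move=> i /=; have [[_ f1] [_ nC]] := (f_sphere i, hu i).
have key w : `|w| = 1 -> 2 - del <= `|u i + w| ->
    2 - eps <= Linf_norm mu (f i \+ cst w).
  by move=> w1 uw; apply: le_trans (Linf_norm_add_cst_ge f1 w1 nC uw); lra.
move: (y_far i); rewrite !le_max => /orP[far|far]; apply/orP; [left; exact: key|right].
rewrite (_ : f i \- cst y = f i \+ cst (- y)); last by apply/funext => t.
by apply: key; rewrite ?normrN.
Qed.

Lemma AOH_L1_of_AOH : measure_is_complete mu -> sigma_finite setT mu ->
  AOH X -> @AOH_L1 d T R X mu.
Proof.
move=> mu_complete mu_sfin aohX n f f_sphere eps eps0.
have [del [del0 del1 del_eps]] :
    exists del : R, [/\ 0 < del, del <= 1 & 4 * del <= eps].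
  by apply: exists_small_pos; rewrite ?ler1n.
have Lf i := (f_sphere i).1; have f1 i := (f_sphere i).2.
have [B [v [mB muB01 near_B]]] := sigma_finite_near_cst_family mu_complete mu_sfin
  (L1_sphere_nonnegligibleT mu_complete (Lf ord0) (f1 ord0)) del0 (fun i => (Lf i).1).
(* a unit vector serves as the direction of the v i that vanish *)
have [e e1] := L1_sphere_exists_unit (f1 ord0).
have /choice[u hu] i : exists u : X, `|u| = 1 /\ v i = `|v i| *: u.
  by have [u] := exists_polar (v i) e1; exists u.
have [y [_ y1 y_far]] := aohX n u (fun i => conj I (hu i).1) del del0.
have [bump_mem bump1] := L1_bump mB muB01 y1.
exists (fun t => \1_B t *: ((fine (mu B))^-1 *: y)); split => // i /=.
have key w : `|w| = 1 -> 2 - del <= `|u i + w| ->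
    2 - eps <= L1_norm mu (f i \+ (fun t => \1_B t *: ((fine (mu B))^-1 *: w))).
  move=> w1 uw; apply: le_trans (L1_norm_add_bump_ge mu_complete (Lf i) (f1 i) mB muB01
    (hu i).1 w1 uw (normr_ge0 (v i)) (ltW del0) del1 _); first lra.
  by move=> t Bt; rewrite -(hu i).2; exact: near_B.
move: (y_far i); rewrite !le_max => /orP[far|far]; apply/orP; [left; exact: key|right].
rewrite (_ : f i \- _ = f i \+ (fun t => \1_B t *: ((fine (mu B))^-1 *: - y))).
  by apply: key; rewrite ?normrN.
by apply/funext => t /=; rewrite !scalerN.
Qed.

End aoh.

Unset Implicit Arguments.

Theorem proposition4p4 (d : measure_display) (T : measurableType d)
  (R : realType) (mu : {measure set T -> \bar R})
  (X : completeNormedModType R) :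
  measure_is_complete mu -> sigma_finite setT mu ->
  AOH X -> @AOH_L1 d T R X mu /\ @AOH_Linf d T R X mu.
Proof.
move=> mu_complete mu_sfin aohX; split.
- exact: AOH_L1_of_AOH mu_complete mu_sfin aohX.
- exact: AOH_Linf_of_AOH aohX.
Qed.
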